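(* A strongly regular Weingarten surface with $\nu_1=f(\nu)$, $\nu_2=g(\nu)$ admits geometric principal parameters which are isothermal (i.e. with $E=G$, $F=0$) if and only if $f'(\nu)+g'(\nu)=0$, i.e. if and only if the mean curvature $H=\frac{f(\nu)+g(\nu)}{2}$ is constant.
   Context: For a surface $x=x(u,v)$ without umbilical points parameterized by principal parameters ($F=M=0$, with $E,F,G$, $L,M,N$ the coefficients of the first and second fundamental forms): $\nu_1=L/E$, $\nu_2=N/G$, $\gamma_1=-\frac{E_v}{2E\sqrt G}$, $\gamma_2=\frac{G_u}{2G\sqrt E}$. The surface is strongly regular if $(\nu_1-\nu_2)\gamma_1\gamma_2\neq0$, with the convention $\nu_1-\nu_2>0$. A strongly regular surface is Weingarten if there exist differentiable $f(\nu),g(\nu)$, $\nu\in\mathcal I\subseteq\mathbb R$, with $f-g>0$, $f'g'\neq0$, and a differentiable $\nu(u,v)\in\mathcal I$ with $\nu_u\nu_v\neq0$, such that $\nu_1=f(\nu)$, $\nu_2=g(\nu)$. With $\Phi$ an antiderivative of $f'/(f-g)$ and $\Psi$ an antiderivative of $g'/(g-f)$, put $\lambda=\ln\sqrt E+\Phi(\nu)$ and $\mu=\ln\sqrt G+\Psi(\nu)$. Principal parameters are geometric principal parameters if $\lambda$ and $\mu$ are constants. *)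

From Stdlib Require Import Reals.
From Coquelicot Require Import Coquelicot.
Open Scope R_scope.

Definition vec3 := (R * R * R)%type.
Definition v1 (a : vec3) : R := fst (fst a).
Definition v2 (a : vec3) : R := snd (fst a).
Definition v3 (a : vec3) : R := snd a.
Definition dot3 (a b : vec3) : R := v1 a * v1 b + v2 a * v2 b + v3 a * v3 b.
Definition cross3 (a b : vec3) : vec3 :=
  (v2 a * v3 b - v3 a * v2 b, v3 a * v1 b - v1 a * v3 b, v1 a * v2 b - v2 a * v1 b).
Definition scal3 (c : R) (a : vec3) : vec3 := (c * v1 a, c * v2 a, c * v3 a).
Definition norm3 (a : vec3) : R := sqrt (dot3 a a).

Definition open_itv (U : R -> Prop) : Prop :=
  (exists a, U a) /\ open U /\ (forall a b c, U a -> U b -> a <= c <= b -> U c).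
Definition rect (U V : R -> Prop) : R -> R -> Prop := fun u v => U u /\ V v.

Definition pu (h : R -> R -> R) : R -> R -> R := fun u v => Derive (fun s => h s v) u.
Definition pv (h : R -> R -> R) : R -> R -> R := fun u v => Derive (fun t => h u t) v.

Fixpoint Ck (k : nat) (D : R -> R -> Prop) (h : R -> R -> R) : Prop :=
  match k with
  | O => forall u v, D u v -> continuous (fun p : R * R => h (fst p) (snd p)) (u, v)
  | S k' =>
      (forall u v, D u v -> continuous (fun p : R * R => h (fst p) (snd p)) (u, v)) /\
      (forall u v, D u v -> ex_derive (fun s => h s v) u /\ ex_derive (fun t => h u t) v) /\
      Ck k' D (pu h) /\ Ck k' D (pv h)
  end.
Definition smooth2 (D : R -> R -> Prop) (h : R -> R -> R) : Prop := forall k, Ck k D h.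

Definition surf := R -> R -> vec3.
Definition c1 (x : surf) : R -> R -> R := fun u v => v1 (x u v).
Definition c2 (x : surf) : R -> R -> R := fun u v => v2 (x u v).
Definition c3 (x : surf) : R -> R -> R := fun u v => v3 (x u v).
Definition Pu (x : surf) : surf := fun u v => (pu (c1 x) u v, pu (c2 x) u v, pu (c3 x) u v).
Definition Pv (x : surf) : surf := fun u v => (pv (c1 x) u v, pv (c2 x) u v, pv (c3 x) u v).

Definition smooth_surf (D : R -> R -> Prop) (x : surf) : Prop :=
  smooth2 D (c1 x) /\ smooth2 D (c2 x) /\ smooth2 D (c3 x).
Definition regular_surf (D : R -> R -> Prop) (x : surf) : Prop :=
  forall u v, D u v -> cross3 (Pu x u v) (Pv x u v) <> (0, 0, 0).

Definition Ef (x : surf) : R -> R -> R := fun u v => dot3 (Pu x u v) (Pu x u v).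
Definition Ff (x : surf) : R -> R -> R := fun u v => dot3 (Pu x u v) (Pv x u v).
Definition Gf (x : surf) : R -> R -> R := fun u v => dot3 (Pv x u v) (Pv x u v).
Definition unormal (x : surf) : surf := fun u v =>
  scal3 (/ norm3 (cross3 (Pu x u v) (Pv x u v))) (cross3 (Pu x u v) (Pv x u v)).
Definition Lf (x : surf) : R -> R -> R := fun u v => dot3 (Pu (Pu x) u v) (unormal x u v).
Definition Mf (x : surf) : R -> R -> R := fun u v => dot3 (Pv (Pu x) u v) (unormal x u v).
Definition Nf (x : surf) : R -> R -> R := fun u v => dot3 (Pv (Pv x) u v) (unormal x u v).

Definition nu1 (x : surf) : R -> R -> R := fun u v => Lf x u v / Ef x u v.
Definition nu2 (x : surf) : R -> R -> R := fun u v => Nf x u v / Gf x u v.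
Definition gamma1 (x : surf) : R -> R -> R := fun u v =>
  - pv (Ef x) u v / (2 * Ef x u v * sqrt (Gf x u v)).
Definition gamma2 (x : surf) : R -> R -> R := fun u v =>
  pu (Gf x) u v / (2 * Gf x u v * sqrt (Ef x u v)).

Definition principal_params (D : R -> R -> Prop) (x : surf) : Prop :=
  forall u v, D u v -> Ff x u v = 0 /\ Mf x u v = 0.

(* strongly regular: (nu1 - nu2) gamma1 gamma2 <> 0, with convention nu1 - nu2 > 0 *)
Definition strongly_regular (D : R -> R -> Prop) (x : surf) : Prop :=
  forall u v, D u v ->
    nu1 x u v - nu2 x u v > 0 /\ gamma1 x u v <> 0 /\ gamma2 x u v <> 0.

Definition weingarten (D : R -> R -> Prop) (x : surf) (I : R -> Prop)
    (f g : R -> R) (nu : R -> R -> R) : Prop :=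
  (forall t, I t -> ex_derive f t /\ ex_derive g t /\ f t - g t > 0 /\
                    Derive f t * Derive g t <> 0) /\
  (forall u v, D u v ->
     I (nu u v) /\ ex_derive (fun s => nu s v) u /\ ex_derive (fun t => nu u t) v /\
     pu nu u v * pv nu u v <> 0 /\
     nu1 x u v = f (nu u v) /\ nu2 x u v = g (nu u v)).

Definition antiderivative_on (I : R -> Prop) (h Phi : R -> R) : Prop :=
  forall t, I t -> is_derive Phi t (h t).

Definition lambda_f (x : surf) (Phi : R -> R) (nu : R -> R -> R) : R -> R -> R :=
  fun u v => ln (sqrt (Ef x u v)) + Phi (nu u v).
Definition mu_f (x : surf) (Psi : R -> R) (nu : R -> R -> R) : R -> R -> R :=
  fun u v => ln (sqrt (Gf x u v)) + Psi (nu u v).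

Definition geometric_principal (D : R -> R -> Prop) (x : surf)
    (Phi Psi : R -> R) (nu : R -> R -> R) : Prop :=
  principal_params D x /\
  exists cl cm : R, forall u v, D u v ->
    lambda_f x Phi nu u v = cl /\ mu_f x Psi nu u v = cm.

Definition isothermal (D : R -> R -> Prop) (x : surf) : Prop :=
  forall u v, D u v -> Ef x u v = Gf x u v /\ Ff x u v = 0.

Definition param_change (U' U : R -> Prop) (phi : R -> R) : Prop :=
  open_itv U' /\
  (forall s, U' s -> ex_derive phi s /\ Derive phi s <> 0 /\ ex_derive (Derive phi) s) /\
  (forall u, U u <-> exists s, U' s /\ phi s = u).

Definition admits_isothermal_gpp (U V : R -> Prop) (x : surf)
    (nu : R -> R -> R) (Phi Psi : R -> R) : Prop :=
  exists (U' V' : R -> Prop) (phi psi : R -> R),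
    param_change U' U phi /\ param_change V' V psi /\
    geometric_principal (rect U' V') (fun s t => x (phi s) (psi t)) Phi Psi
                        (fun s t => nu (phi s) (psi t)) /\
    isothermal (rect U' V') (fun s t => x (phi s) (psi t)).

(* Codazzi's equations for principal parameters, (nu1)_v = E_v (nu2 - nu1) / (2 E) and
   (nu2)_u = G_u (nu1 - nu2) / (2 G), combined with nu1 = f nu, nu2 = g nu, show that lambda
   depends on u only and mu on v only.  Geometric principal parameters are then obtained by
   solving ds = exp lambda du, dt = exp mu dv, and in them ln sqrt E = - Phi nu and
   ln sqrt G = - Psi nu up to constants.  Hence some of them are isothermal iff Phi nu - Psi nu
   is constant; as (Phi - Psi)' = (f' + g') / (f - g) and nu_u nu_v <> 0, this happens iff
   f' + g' = 0, i.e. iff H = (f + g) / 2 is constant. *)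

From Pilot Require Import Defs.
From Stdlib Require Import Reals Lra Psatz ClassicalEpsilon.
From Coquelicot Require Import Coquelicot.
Import Defs.
Open Scope R_scope.

Lemma is_derive_replace (f : R -> R) (t l l' : R) : is_derive f t l -> l = l' -> is_derive f t l'.
Proof. intros H ->; exact H. Qed.

Lemma is_derive_Rmult (f g : R -> R) t df dg : is_derive f t df -> is_derive g t dg ->
  is_derive (fun s => f s * g s) t (df * g t + f t * dg).
Proof. intros Hf Hg. apply (is_derive_mult f g t df dg Hf Hg). intros; apply Rmult_comm. Qed.

Lemma is_derive_locally_const (h : R -> R) t k d :
  locally t (fun s => h s = k) -> is_derive h t d -> d = 0.
Proof.
  intros Hl Hd.
  assert (H : is_derive (fun _ => k) t d) by (apply (is_derive_ext_loc h); assumption).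
  apply is_derive_unique in H. rewrite Derive_const in H. auto.
Qed.

Lemma is_derive_ln_sqrt (h : R -> R) t dh : is_derive h t dh -> 0 < h t ->
  is_derive (fun s => ln (sqrt (h s))) t (dh / (2 * h t)).
Proof.
  intros H P. assert (Q := sqrt_lt_R0 _ P).
  eapply is_derive_replace.
  - apply (is_derive_comp ln (fun s => sqrt (h s))).
    + apply is_derive_ln, Q.
    + apply (is_derive_sqrt h t dh H P).
  - change (dh / (2 * sqrt (h t)) * / sqrt (h t) = dh / (2 * h t)).
    rewrite <- (sqrt_sqrt (h t)) at 3 by lra. field. lra.
Qed.

Lemma ln_sqrt_inj a b : 0 < a -> 0 < b -> ln (sqrt a) = ln (sqrt b) -> a = b.
Proof.
  intros Ha Hb H. apply ln_inv in H; try (apply sqrt_lt_R0; auto).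
  apply sqrt_inj; lra.
Qed.

Lemma ln_sqrt_scale k E : 0 < k -> 0 < E -> ln (sqrt (k ^ 2 * E)) = ln k + ln (sqrt E).
Proof.
  intros Hk HE. rewrite sqrt_mult_alt by (apply pow_le; lra).
  rewrite <- Rsqr_pow2, sqrt_Rsqr by lra. apply ln_mult; auto. apply sqrt_lt_R0; auto.
Qed.

Lemma open_itv_locally (U : R -> Prop) u : open_itv U -> U u -> locally u U.
Proof. intros [_ [Ho _]] Hu. apply Ho, Hu. Qed.

Lemma open_itv_between (U : R -> Prop) a b c : open_itv U -> U a -> U b -> a <= c <= b -> U c.
Proof. intros [_ [_ Hi]]. apply Hi. Qed.

Lemma open_itv_shrink (U : R -> Prop) u : open_itv U -> U u ->
  exists e, 0 < e /\ U (u - e) /\ U (u + e).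
Proof.
  intros HU Hu. destruct (open_itv_locally U u HU Hu) as [e He].
  assert (e0 := cond_pos e).
  exists (e / 2). split; [lra|]. split; apply He.
  - change (Rabs (u - e / 2 - u) < e).
    replace (u - e / 2 - u) with (- (e / 2)) by ring. rewrite Rabs_Ropp, Rabs_pos_eq; lra.
  - change (Rabs (u + e / 2 - u) < e).
    replace (u + e / 2 - u) with (e / 2) by ring. rewrite Rabs_pos_eq; lra.
Qed.

Lemma open_itv_deriv0_const (U : R -> Prop) (h : R -> R) : open_itv U ->
  (forall u, U u -> is_derive h u 0) -> forall a b, U a -> U b -> h a = h b.
Proof.
  intros HU Hd.
  assert (K : forall a b, a < b -> U a -> U b -> h a = h b).
  { intros a b Hab Ha Hb. apply (eq_is_derive h a b); [|exact Hab].
    intros t Ht. apply Hd, (open_itv_between U a b); auto. }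
  intros a b Ha Hb. destruct (Rtotal_order a b) as [H|[H|H]].
  - apply K; auto.
  - subst; auto.
  - symmetry; apply K; auto.
Qed.

Lemma rect_deriv0_const (U V : R -> Prop) (h : R -> R -> R) : open_itv U -> open_itv V ->
  (forall u v, rect U V u v -> is_derive (fun s => h s v) u 0) ->
  (forall u v, rect U V u v -> is_derive (fun t => h u t) v 0) ->
  forall u v u' v', rect U V u v -> rect U V u' v' -> h u v = h u' v'.
Proof.
  intros HU HV Hu Hv u v u' v' [H1 H2] [H3 H4].
  transitivity (h u' v).
  - apply (open_itv_deriv0_const U (fun s => h s v)); auto. intros w Hw. apply Hu; split; auto.
  - apply (open_itv_deriv0_const V (fun t => h u' t)); auto. intros w Hw. apply Hv; split; auto.
Qed.

Lemma rect_locally_2d U V u v : open_itv U -> open_itv V -> rect U V u v ->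
  locally_2d (rect U V) u v.
Proof.
  intros HU HV [Hu Hv].
  destruct (open_itv_locally U u HU Hu) as [e1 K1].
  destruct (open_itv_locally V v HV Hv) as [e2 K2].
  assert (H : 0 < Rmin e1 e2) by (apply Rmin_pos; apply cond_pos).
  exists (mkposreal _ H). simpl. intros u' v' H1 H2. split.
  - apply K1. eapply Rlt_le_trans; [exact H1|apply Rmin_l].
  - apply K2. eapply Rlt_le_trans; [exact H2|apply Rmin_r].
Qed.

Lemma rect_locally_u U V u v : open_itv U -> rect U V u v -> locally u (fun s => rect U V s v).
Proof.
  intros HU [Hu Hv]. apply (filter_imp U); [|apply open_itv_locally; auto].
  intros; split; auto.
Qed.

Lemma rect_locally_v U V u v : open_itv V -> rect U V u v -> locally v (fun t => rect U V u t).
Proof.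
  intros HV [Hu Hv]. apply (filter_imp V); [|apply open_itv_locally; auto].
  intros; split; auto.
Qed.

Lemma is_derive_antiderivative_comp (F Phi n h : R -> R) t dh c :
  ex_derive F (n t) -> ex_derive n t -> is_derive Phi (n t) (Derive F (n t) / c) ->
  locally t (fun s => h s = F (n s)) -> is_derive h t dh ->
  is_derive (fun s => Phi (n s)) t (dh / c).
Proof.
  intros HF Hn HPhi Hh Hd.
  assert (Hdh : dh = Derive n t * Derive F (n t)).
  { rewrite <- (is_derive_unique _ _ _ (is_derive_ext_loc _ _ _ _ Hh Hd)).
    apply is_derive_unique, (is_derive_comp F n); apply Derive_correct; assumption. }
  eapply is_derive_replace.
  - apply (is_derive_comp Phi n); [exact HPhi|apply Derive_correct, Hn].
  - change (Derive n t * (Derive F (n t) / c) = dh / c).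
    rewrite Hdh. unfold Rdiv. ring.
Qed.

(** * Vectors in R^3 *)

Lemma dot3_comm a b : dot3 a b = dot3 b a.
Proof. unfold dot3; ring. Qed.

Lemma dot3_scal_r k a b : dot3 a (scal3 k b) = k * dot3 a b.
Proof. unfold dot3, scal3, v1, v2, v3; simpl; ring. Qed.

Lemma dot3_scal_l k a b : dot3 (scal3 k a) b = k * dot3 a b.
Proof. rewrite dot3_comm, dot3_scal_r, dot3_comm; reflexivity. Qed.

Lemma dot3_self_ge0 a : 0 <= dot3 a a.
Proof. unfold dot3; nra. Qed.

Lemma dot3_self_pos a : a <> (0, 0, 0) -> 0 < dot3 a a.
Proof.
  destruct a as [[a1 a2] a3]. unfold dot3, v1, v2, v3; simpl. intros H.
  destruct (Req_dec a1 0); destruct (Req_dec a2 0); destruct (Req_dec a3 0); subst;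
  try (exfalso; apply H; reflexivity); nra.
Qed.

Lemma norm3_pos a : a <> (0, 0, 0) -> 0 < norm3 a.
Proof. intros H. apply sqrt_lt_R0, dot3_self_pos, H. Qed.

Lemma norm3_sq a : norm3 a * norm3 a = dot3 a a.
Proof. apply sqrt_sqrt, dot3_self_ge0. Qed.

Lemma dot3_cross_l a b : dot3 a (cross3 a b) = 0.
Proof.
  destruct a as [[a1 a2] a3]; destruct b as [[b1 b2] b3].
  unfold dot3, cross3, v1, v2, v3; simpl; ring.
Qed.

Lemma dot3_cross_r a b : dot3 b (cross3 a b) = 0.
Proof.
  destruct a as [[a1 a2] a3]; destruct b as [[b1 b2] b3].
  unfold dot3, cross3, v1, v2, v3; simpl; ring.
Qed.

Lemma cross3_anticomm a b : cross3 b a = scal3 (-1) (cross3 a b).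
Proof.
  destruct a as [[a1 a2] a3]; destruct b as [[b1 b2] b3].
  unfold scal3, cross3, v1, v2, v3; simpl; f_equal; [f_equal|]; ring.
Qed.

Lemma cross3_scal k l a b : cross3 (scal3 k a) (scal3 l b) = scal3 (k * l) (cross3 a b).
Proof.
  destruct a as [[a1 a2] a3]; destruct b as [[b1 b2] b3].
  unfold scal3, cross3, v1, v2, v3; simpl; f_equal; [f_equal|]; ring.
Qed.

Lemma norm3_opp a : norm3 (scal3 (-1) a) = norm3 a.
Proof. unfold norm3. rewrite dot3_scal_l, dot3_scal_r. f_equal; ring. Qed.

Lemma cross3_lagrange a b :
  dot3 (cross3 a b) (cross3 a b) = dot3 a a * dot3 b b - dot3 a b * dot3 a b.
Proof.
  destruct a as [[a1 a2] a3]; destruct b as [[b1 b2] b3].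
  unfold dot3, cross3, v1, v2, v3; simpl. ring.
Qed.

Lemma cross3_gram a b y z :
  dot3 (cross3 a b) (cross3 a b) * dot3 y z =
  (dot3 y a * dot3 b b - dot3 y b * dot3 a b) * dot3 a z +
  (dot3 y b * dot3 a a - dot3 y a * dot3 a b) * dot3 b z +
  dot3 y (cross3 a b) * dot3 (cross3 a b) z.
Proof.
  destruct a as [[a1 a2] a3]; destruct b as [[b1 b2] b3];
  destruct y as [[y1 y2] y3]; destruct z as [[z1 z2] z3].
  unfold dot3, cross3, v1, v2, v3; simpl. ring.
Qed.

Lemma dot3_self_pos_of_cross_l a b : cross3 a b <> (0, 0, 0) -> 0 < dot3 a a.
Proof.
  intros HW. assert (P := dot3_self_pos _ HW). rewrite cross3_lagrange in P.
  assert (Ha := dot3_self_ge0 a). assert (Hb := dot3_self_ge0 b). nra.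
Qed.

Lemma dot3_self_pos_of_cross_r a b : cross3 a b <> (0, 0, 0) -> 0 < dot3 b b.
Proof.
  intros HW. assert (P := dot3_self_pos _ HW). rewrite cross3_lagrange in P.
  assert (Ha := dot3_self_ge0 a). assert (Hb := dot3_self_ge0 b). nra.
Qed.

Lemma dot3_orth_frame a b y z : dot3 a b = 0 -> cross3 a b <> (0, 0, 0) ->
  dot3 (scal3 (/ norm3 (cross3 a b)) (cross3 a b)) z = 0 ->
  dot3 y z = dot3 y a * dot3 a z / dot3 a a + dot3 y b * dot3 b z / dot3 b b.
Proof.
  intros Hab HW Hnz.
  assert (Ea := dot3_self_pos_of_cross_l a b HW).
  assert (Eb := dot3_self_pos_of_cross_r a b HW).
  assert (Hz : dot3 (cross3 a b) z = 0).
  { rewrite dot3_scal_l in Hnz. assert (Hn := norm3_pos _ HW).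
    apply Rmult_integral in Hnz as [H|H]; [|exact H].
    exfalso. apply (Rinv_neq_0_compat (norm3 (cross3 a b))); lra. }
  assert (K := cross3_gram a b y z).
  rewrite cross3_lagrange, Hab, Hz in K.
  apply (Rmult_eq_reg_l (dot3 a a * dot3 b b)); [|nra].
  replace (dot3 a a * dot3 b b * dot3 y z) with
    ((dot3 a a * dot3 b b - 0 * 0) * dot3 y z) by ring.
  rewrite K. field. lra.
Qed.

Definition vec_is_derive (F : R -> vec3) (t : R) (d : vec3) : Prop :=
  is_derive (fun s => v1 (F s)) t (v1 d) /\ is_derive (fun s => v2 (F s)) t (v2 d) /\
  is_derive (fun s => v3 (F s)) t (v3 d).

Lemma vec_is_derive_dot F G t dF dG : vec_is_derive F t dF -> vec_is_derive G t dG ->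
  is_derive (fun s => dot3 (F s) (G s)) t (dot3 dF (G t) + dot3 (F t) dG).
Proof.
  intros [H1 [H2 H3]] [K1 [K2 K3]].
  eapply is_derive_replace.
  - apply (is_derive_plus _ _ _ _ _ (is_derive_plus _ _ _ _ _
      (is_derive_Rmult _ _ _ _ _ H1 K1) (is_derive_Rmult _ _ _ _ _ H2 K2))
      (is_derive_Rmult _ _ _ _ _ H3 K3)).
  - unfold dot3, plus; simpl. ring.
Qed.

Lemma vec_is_derive_dot_locally_const F G t dF dG k :
  vec_is_derive F t dF -> vec_is_derive G t dG ->
  locally t (fun s => dot3 (F s) (G s) = k) -> dot3 dF (G t) + dot3 (F t) dG = 0.
Proof.
  intros HF HG Hk. exact (is_derive_locally_const _ _ _ _ Hk (vec_is_derive_dot _ _ _ _ _ HF HG)).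
Qed.

Lemma ex_derive_unit_cross (a1 a2 a3 b1 b2 b3 : R -> R) t :
  ex_derive a1 t -> ex_derive a2 t -> ex_derive a3 t ->
  ex_derive b1 t -> ex_derive b2 t -> ex_derive b3 t ->
  cross3 (a1 t, a2 t, a3 t) (b1 t, b2 t, b3 t) <> (0, 0, 0) ->
  let n := fun s => let W := cross3 (a1 s, a2 s, a3 s) (b1 s, b2 s, b3 s) in
                    scal3 (/ norm3 W) W in
  ex_derive (fun s => v1 (n s)) t /\ ex_derive (fun s => v2 (n s)) t /\
  ex_derive (fun s => v3 (n s)) t.
Proof.
  intros A1 A2 A3 B1 B2 B3 HW n.
  assert (P := dot3_self_pos _ HW).
  assert (Q := norm3_pos _ HW). unfold norm3 in Q.
  unfold n, scal3, norm3, cross3, dot3, v1, v2, v3 in *; simpl in *.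
  repeat split; auto_derive; unfold Rminus in P; repeat split; try assumption;
    try (apply Rgt_not_eq, sqrt_lt_R0); lra.
Qed.

Lemma Ck_continuous k D h : Ck k D h -> forall u v, D u v ->
  continuous (fun p : R * R => h (fst p) (snd p)) (u, v).
Proof. destruct k; [exact (fun H => H)|]. intros [H _]. exact H. Qed.

Lemma Ck_pred k D h : Ck (S k) D h -> Ck k D h.
Proof.
  revert h. induction k; intros h H.
  - exact (proj1 H).
  - destruct H as [H1 [H2 [H3 H4]]]. split; [|split; [|split]]; auto.
Qed.

Lemma Ck_pu k D h : Ck (S k) D h -> Ck k D (pu h).
Proof. intros [_ [_ [H _]]]. exact H. Qed.

Lemma Ck_pv k D h : Ck (S k) D h -> Ck k D (pv h).
Proof. intros [_ [_ [_ H]]]. exact H. Qed.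

Lemma Ck_ex_derive_u k D h u v : Ck (S k) D h -> D u v -> ex_derive (fun s => h s v) u.
Proof. intros [_ [H _]] Huv. exact (proj1 (H u v Huv)). Qed.

Lemma Ck_ex_derive_v k D h u v : Ck (S k) D h -> D u v -> ex_derive (fun t => h u t) v.
Proof. intros [_ [H _]] Huv. exact (proj2 (H u v Huv)). Qed.

Lemma Ck_swap k U V h : Ck k (rect U V) h -> Ck k (rect V U) (fun u v => h v u).
Proof.
  assert (C : forall (h : R -> R -> R) u v,
    (forall u v, rect U V u v -> continuous (fun p : R * R => h (fst p) (snd p)) (u, v)) ->
    rect V U u v -> continuous (fun p : R * R => h (snd p) (fst p)) (u, v)).
  { intros h0 u v H [H1 H2].
    apply (continuous_comp_2 snd fst (fun a b => h0 a b) (u, v)).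
    - apply continuous_snd.
    - apply continuous_fst.
    - apply (H v u). split; auto. }
  revert h. induction k; intros h H.
  - intros u v Huv. apply C; auto.
  - destruct H as [H1 [H2 [H3 H4]]]. split; [|split; [|split]].
    + intros u v Huv. apply C; auto.
    + intros u v [Hu Hv]. destruct (H2 v u) as [E1 E2]; [split; auto|]. split; auto.
    + exact (IHk _ H4).
    + exact (IHk _ H3).
Qed.

Lemma Ck_schwarz U V h u v : open_itv U -> open_itv V -> Ck 2 (rect U V) h ->
  rect U V u v -> pu (pv h) u v = pv (pu h) u v.
Proof.
  intros HU HV H Huv. apply Schwarz.
  - apply (locally_2d_impl (rect U V)); [|apply rect_locally_2d; auto].
    apply locally_2d_forall. intros a b Hab. repeat split.
    + apply (Ck_ex_derive_u 0 (rect U V)); auto. apply Ck_pred, H.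
    + apply (Ck_ex_derive_v 0 (rect U V)); auto. apply Ck_pred, H.
    + apply (Ck_ex_derive_u 0 (rect U V) (pv h)); auto. apply Ck_pv, H.
    + apply (Ck_ex_derive_v 0 (rect U V) (pu h)); auto. apply Ck_pu, H.
  - apply continuity_2d_pt_filterlim.
    apply (Ck_continuous 0 (rect U V) (pu (pv h))); auto. apply Ck_pu, Ck_pv, H.
  - apply continuity_2d_pt_filterlim.
    apply (Ck_continuous 0 (rect U V) (pv (pu h))); auto. apply Ck_pv, Ck_pu, H.
Qed.

Lemma smooth_surf_Pu D X : smooth_surf D X -> smooth_surf D (Pu X).
Proof. intros [H1 [H2 H3]]. split; [|split]; intro k; apply Ck_pu; [apply H1|apply H2|apply H3]. Qed.

Lemma smooth_surf_Pv D X : smooth_surf D X -> smooth_surf D (Pv X).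
Proof. intros [H1 [H2 H3]]. split; [|split]; intro k; apply Ck_pv; [apply H1|apply H2|apply H3]. Qed.

Lemma smooth_surf_vec_is_derive_u D X u v : smooth_surf D X -> D u v ->
  vec_is_derive (fun s => X s v) u (Pu X u v).
Proof.
  intros [H1 [H2 H3]] Huv. split; [|split]; apply Derive_correct.
  - exact (Ck_ex_derive_u 0 D (c1 X) u v (H1 1%nat) Huv).
  - exact (Ck_ex_derive_u 0 D (c2 X) u v (H2 1%nat) Huv).
  - exact (Ck_ex_derive_u 0 D (c3 X) u v (H3 1%nat) Huv).
Qed.

Lemma smooth_surf_vec_is_derive_v D X u v : smooth_surf D X -> D u v ->
  vec_is_derive (fun t => X u t) v (Pv X u v).
Proof.
  intros [H1 [H2 H3]] Huv. split; [|split]; apply Derive_correct.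
  - exact (Ck_ex_derive_v 0 D (c1 X) u v (H1 1%nat) Huv).
  - exact (Ck_ex_derive_v 0 D (c2 X) u v (H2 1%nat) Huv).
  - exact (Ck_ex_derive_v 0 D (c3 X) u v (H3 1%nat) Huv).
Qed.

Lemma smooth_surf_Pu_Pv U V X u v : open_itv U -> open_itv V ->
  smooth_surf (rect U V) X -> rect U V u v -> Pu (Pv X) u v = Pv (Pu X) u v.
Proof.
  intros HU HV [H1 [H2 H3]] Huv. unfold Pu, Pv; simpl.
  f_equal; [f_equal|]; apply (Ck_schwarz U V); auto.
Qed.

Lemma unormal_unit x u v : cross3 (Pu x u v) (Pv x u v) <> (0, 0, 0) ->
  dot3 (unormal x u v) (unormal x u v) = 1.
Proof.
  intros HW. unfold unormal. rewrite dot3_scal_l, dot3_scal_r, <- norm3_sq.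
  assert (H := norm3_pos _ HW). field. lra.
Qed.

Lemma unormal_orth_u x u v : dot3 (Pu x u v) (unormal x u v) = 0.
Proof. unfold unormal. rewrite dot3_scal_r, dot3_cross_l. ring. Qed.

Lemma unormal_orth_v x u v : dot3 (Pv x u v) (unormal x u v) = 0.
Proof. unfold unormal. rewrite dot3_scal_r, dot3_cross_r. ring. Qed.

Lemma unormal_vec_is_derive_u D x u v : smooth_surf D x -> regular_surf D x -> D u v ->
  exists dn, vec_is_derive (fun s => unormal x s v) u dn.
Proof.
  intros Hs Hr Huv.
  assert (Ha := smooth_surf_vec_is_derive_u D (Pu x) u v (smooth_surf_Pu D x Hs) Huv).
  assert (Hb := smooth_surf_vec_is_derive_u D (Pv x) u v (smooth_surf_Pv D x Hs) Huv).
  destruct Ha as [A1 [A2 A3]]. destruct Hb as [B1 [B2 B3]].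
  destruct (ex_derive_unit_cross (fun s => pu (c1 x) s v) (fun s => pu (c2 x) s v)
    (fun s => pu (c3 x) s v) (fun s => pv (c1 x) s v) (fun s => pv (c2 x) s v)
    (fun s => pv (c3 x) s v) u) as [N1 [N2 N3]];
    try (eexists; eassumption); [apply Hr, Huv|].
  exists (Derive (fun s => v1 (unormal x s v)) u, Derive (fun s => v2 (unormal x s v)) u,
          Derive (fun s => v3 (unormal x s v)) u).
  split; [|split]; apply Derive_correct; [exact N1|exact N2|exact N3].
Qed.

Lemma unormal_vec_is_derive_v D x u v : smooth_surf D x -> regular_surf D x -> D u v ->
  exists dn, vec_is_derive (fun t => unormal x u t) v dn.
Proof.
  intros Hs Hr Huv.
  assert (Ha := smooth_surf_vec_is_derive_v D (Pu x) u v (smooth_surf_Pu D x Hs) Huv).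
  assert (Hb := smooth_surf_vec_is_derive_v D (Pv x) u v (smooth_surf_Pv D x Hs) Huv).
  destruct Ha as [A1 [A2 A3]]. destruct Hb as [B1 [B2 B3]].
  destruct (ex_derive_unit_cross (fun t => pu (c1 x) u t) (fun t => pu (c2 x) u t)
    (fun t => pu (c3 x) u t) (fun t => pv (c1 x) u t) (fun t => pv (c2 x) u t)
    (fun t => pv (c3 x) u t) v) as [N1 [N2 N3]];
    try (eexists; eassumption); [apply Hr, Huv|].
  exists (Derive (fun t => v1 (unormal x u t)) v, Derive (fun t => v2 (unormal x u t)) v,
          Derive (fun t => v3 (unormal x u t)) v).
  split; [|split]; apply Derive_correct; [exact N1|exact N2|exact N3].
Qed.

Lemma Ef_pos D x u v : regular_surf D x -> D u v -> 0 < Ef x u v.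
Proof. intros Hr Huv. exact (dot3_self_pos_of_cross_l _ _ (Hr u v Huv)). Qed.

Lemma Gf_pos D x u v : regular_surf D x -> D u v -> 0 < Gf x u v.
Proof. intros Hr Huv. exact (dot3_self_pos_of_cross_r _ _ (Hr u v Huv)). Qed.

Lemma Ef_ex_derive_u D x u v : smooth_surf D x -> D u v -> ex_derive (fun s => Ef x s v) u.
Proof.
  intros Hs Huv. assert (K := smooth_surf_vec_is_derive_u D _ u v (smooth_surf_Pu D x Hs) Huv).
  eexists. exact (vec_is_derive_dot _ _ _ _ _ K K).
Qed.

Lemma Ef_ex_derive_v D x u v : smooth_surf D x -> D u v -> ex_derive (fun t => Ef x u t) v.
Proof.
  intros Hs Huv. assert (K := smooth_surf_vec_is_derive_v D _ u v (smooth_surf_Pu D x Hs) Huv).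
  eexists. exact (vec_is_derive_dot _ _ _ _ _ K K).
Qed.

Lemma Gf_ex_derive_u D x u v : smooth_surf D x -> D u v -> ex_derive (fun s => Gf x s v) u.
Proof.
  intros Hs Huv. assert (K := smooth_surf_vec_is_derive_u D _ u v (smooth_surf_Pv D x Hs) Huv).
  eexists. exact (vec_is_derive_dot _ _ _ _ _ K K).
Qed.

Lemma Gf_ex_derive_v D x u v : smooth_surf D x -> D u v -> ex_derive (fun t => Gf x u t) v.
Proof.
  intros Hs Huv. assert (K := smooth_surf_vec_is_derive_v D _ u v (smooth_surf_Pv D x Hs) Huv).
  eexists. exact (vec_is_derive_dot _ _ _ _ _ K K).
Qed.

Definition swap_surf (x : surf) : surf := fun u v => x v u.

Lemma unormal_swap x u v : unormal (swap_surf x) u v = scal3 (-1) (unormal x v u).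
Proof.
  unfold unormal.
  change (Pu (swap_surf x) u v) with (Pv x v u). change (Pv (swap_surf x) u v) with (Pu x v u).
  rewrite cross3_anticomm, norm3_opp.
  generalize (/ norm3 (cross3 (Pu x v u) (Pv x v u))); intro k.
  destruct (cross3 (Pu x v u) (Pv x v u)) as [[w1 w2] w3].
  unfold scal3, v1, v2, v3; simpl. f_equal; [f_equal|]; ring.
Qed.

Lemma Lf_swap x u v : Lf (swap_surf x) u v = - Nf x v u.
Proof.
  unfold Lf, Nf. rewrite unormal_swap, dot3_scal_r.
  change (Pu (Pu (swap_surf x)) u v) with (Pv (Pv x) v u). ring.
Qed.

Lemma Nf_swap x u v : Nf (swap_surf x) u v = - Lf x v u.
Proof.
  unfold Lf, Nf. rewrite unormal_swap, dot3_scal_r.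
  change (Pv (Pv (swap_surf x)) u v) with (Pu (Pu x) v u). ring.
Qed.

Section Swap.
Variables (U V : R -> Prop) (x : surf).
Hypotheses (HU : open_itv U) (HV : open_itv V) (Hs : smooth_surf (rect U V) x).

Lemma smooth_surf_swap : smooth_surf (rect V U) (swap_surf x).
Proof.
  destruct Hs as [S1 [S2 S3]]. split; [|split]; intro k; apply (Ck_swap k U V); auto.
Qed.

Lemma regular_surf_swap : regular_surf (rect U V) x -> regular_surf (rect V U) (swap_surf x).
Proof.
  intros Hr u v [H1 H2] HW. apply (Hr v u); [split; auto|].
  change (cross3 (Pv x v u) (Pu x v u) = (0, 0, 0)) in HW.
  rewrite cross3_anticomm in HW. revert HW.
  destruct (cross3 (Pu x v u) (Pv x v u)) as [[w1 w2] w3].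
  unfold scal3, v1, v2, v3; simpl. intros HW. injection HW; intros.
  f_equal; [f_equal|]; lra.
Qed.

Lemma principal_params_swap :
  principal_params (rect U V) x -> principal_params (rect V U) (swap_surf x).
Proof.
  intros Hp u v [H1 H2]. assert (Huv : rect U V v u) by (split; auto).
  destruct (Hp v u Huv) as [F0 M0]. split.
  - change (dot3 (Pv x v u) (Pu x v u) = 0). rewrite dot3_comm. exact F0.
  - unfold Mf. rewrite unormal_swap, dot3_scal_r.
    change (Pv (Pu (swap_surf x)) u v) with (Pu (Pv x) v u).
    rewrite (smooth_surf_Pu_Pv U V x v u HU HV Hs Huv). unfold Mf in M0. rewrite M0. ring.
Qed.

End Swap.

(** * The Codazzi equations *)

Section Codazzi.
Variables (U V : R -> Prop) (x : surf).
Hypotheses (HU : open_itv U) (HV : open_itv V) (Hs : smooth_surf (rect U V) x)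
  (Hr : regular_surf (rect U V) x) (Hp : principal_params (rect U V) x).

Lemma unormal_weingarten_v u v : rect U V u v ->
  exists nv, vec_is_derive (fun t => unormal x u t) v nv /\
    dot3 (Pu x u v) nv = 0 /\ dot3 (Pv x u v) nv = - Nf x u v /\ dot3 (unormal x u v) nv = 0.
Proof.
  intros Huv. destruct (unormal_vec_is_derive_v _ x u v Hs Hr Huv) as [nv dN].
  exists nv. split; [exact dN|].
  assert (dA := smooth_surf_vec_is_derive_v _ _ u v (smooth_surf_Pu _ _ Hs) Huv).
  assert (dB := smooth_surf_vec_is_derive_v _ _ u v (smooth_surf_Pv _ _ Hs) Huv).
  assert (Ka := vec_is_derive_dot_locally_const _ _ _ _ _ 0 dA dN
    (filter_forall _ (fun t => unormal_orth_u x u t))).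
  assert (Kb := vec_is_derive_dot_locally_const _ _ _ _ _ 0 dB dN
    (filter_forall _ (fun t => unormal_orth_v x u t))).
  assert (Kn := vec_is_derive_dot_locally_const _ _ _ _ _ 1 dN dN
    (filter_imp _ _ (fun t Ht => unormal_unit x u t (Hr u t Ht)) (rect_locally_v U V u v HV Huv))).
  cbv beta in Ka, Kb, Kn. rewrite (dot3_comm nv) in Kn.
  assert (HM := proj2 (Hp u v Huv)). unfold Mf in HM. unfold Nf. split; [|split]; lra.
Qed.

Lemma unormal_weingarten_u u v : rect U V u v ->
  exists nu, vec_is_derive (fun s => unormal x s v) u nu /\
    dot3 (Pu x u v) nu = - Lf x u v /\ dot3 (Pv x u v) nu = 0 /\ dot3 (unormal x u v) nu = 0.
Proof.
  intros Huv. destruct (unormal_vec_is_derive_u _ x u v Hs Hr Huv) as [nu dN].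
  exists nu. split; [exact dN|].
  assert (dA := smooth_surf_vec_is_derive_u _ _ u v (smooth_surf_Pu _ _ Hs) Huv).
  assert (dB := smooth_surf_vec_is_derive_u _ _ u v (smooth_surf_Pv _ _ Hs) Huv).
  rewrite (smooth_surf_Pu_Pv U V x u v HU HV Hs Huv) in dB.
  assert (Ka := vec_is_derive_dot_locally_const _ _ _ _ _ 0 dA dN
    (filter_forall _ (fun s => unormal_orth_u x s v))).
  assert (Kb := vec_is_derive_dot_locally_const _ _ _ _ _ 0 dB dN
    (filter_forall _ (fun s => unormal_orth_v x s v))).
  assert (Kn := vec_is_derive_dot_locally_const _ _ _ _ _ 1 dN dN
    (filter_imp _ _ (fun s Hs1 => unormal_unit x s v (Hr s v Hs1)) (rect_locally_u U V u v HU Huv))).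
  cbv beta in Ka, Kb, Kn. rewrite (dot3_comm nu) in Kn.
  assert (HM := proj2 (Hp u v Huv)). unfold Mf in HM. unfold Lf. split; [|split]; lra.
Qed.

(* Expanding the derivatives of the normal in the orthogonal frame [x_u, x_v, n]. *)
Lemma codazzi_v u v : rect U V u v ->
  is_derive (fun t => Lf x u t) v (pv (Ef x) u v * (nu1 x u v + nu2 x u v) / 2).
Proof.
  intros Huv.
  assert (Hs' := smooth_surf_Pu _ _ Hs).
  assert (dA_v := smooth_surf_vec_is_derive_v _ _ u v Hs' Huv).
  assert (HEv : pv (Ef x) u v = 2 * dot3 (Pu x u v) (Pv (Pu x) u v)).
  { apply is_derive_unique. eapply is_derive_replace; [exact (vec_is_derive_dot _ _ _ _ _ dA_v dA_v)|].
    rewrite (dot3_comm (Pv (Pu x) u v)). ring. }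
  assert (dAuu_v := smooth_surf_vec_is_derive_v _ _ u v (smooth_surf_Pu _ _ Hs') Huv).
  assert (dA_u := smooth_surf_vec_is_derive_u _ _ u v Hs' Huv).
  assert (dB_u := smooth_surf_vec_is_derive_u _ _ u v (smooth_surf_Pv _ _ Hs) Huv).
  rewrite (smooth_surf_Pu_Pv U V x u v HU HV Hs Huv) in dB_u.
  assert (dC_u := smooth_surf_vec_is_derive_u _ _ u v (smooth_surf_Pv _ _ Hs') Huv).
  rewrite (smooth_surf_Pu_Pv U V (Pu x) u v HU HV Hs' Huv) in dC_u.
  destruct (unormal_weingarten_v u v Huv) as [nv [dN_v [Hanv [Hbnv Hnnv]]]].
  destruct (unormal_weingarten_u u v Huv) as [nu [dN_u [Hanu [Hbnu Hnnu]]]].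
  assert (Hauub := vec_is_derive_dot_locally_const _ _ _ _ _ 0 dA_u dB_u
    (filter_imp _ _ (fun s Hs1 => proj1 (Hp s v Hs1)) (rect_locally_u U V u v HU Huv))).
  assert (Hauuv := vec_is_derive_dot_locally_const _ _ _ _ _ 0 dC_u dN_u
    (filter_imp _ _ (fun s Hs1 => proj2 (Hp s v Hs1)) (rect_locally_u U V u v HU Huv))).
  cbv beta in Hauub, Hauuv.
  assert (HF := proj1 (Hp u v Huv)). assert (HW := Hr u v Huv).
  set (a := Pu x u v) in *. set (b := Pv x u v) in *. set (c := Pv (Pu x) u v) in *.
  assert (X1 := dot3_orth_frame a b (Pu (Pu x) u v) nv HF HW Hnnv).
  assert (X2 := dot3_orth_frame a b c nu HF HW Hnnu).
  rewrite Hanv, Hbnv in X1. rewrite Hanu, Hbnu, (dot3_comm c a) in X2.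
  assert (E0 : 0 < dot3 a a) by exact (Ef_pos _ _ _ _ Hr Huv).
  assert (G0 : 0 < dot3 b b) by exact (Gf_pos _ _ _ _ Hr Huv).
  rewrite HEv.
  eapply is_derive_replace; [exact (vec_is_derive_dot _ _ _ _ _ dAuu_v dN_v)|].
  cbv beta. rewrite X1. unfold nu1, nu2, Ef, Gf. fold a b.
  replace (dot3 (Pu (Pu x) u v) b) with (- dot3 a c) by lra.
  replace (dot3 (Pv (Pu (Pu x)) u v) (unormal x u v)) with (- dot3 c nu) by lra.
  rewrite X2. field. split; lra.
Qed.

Lemma nu1_is_derive_v u v : rect U V u v ->
  is_derive (fun t => nu1 x u t) v
    (pv (Ef x) u v * (nu2 x u v - nu1 x u v) / (2 * Ef x u v)).
Proof.
  intros Huv. assert (E0 := Ef_pos _ _ _ _ Hr Huv).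
  eapply is_derive_replace.
  - apply (is_derive_div (fun t => Lf x u t) (fun t => Ef x u t)).
    + apply codazzi_v, Huv.
    + apply Derive_correct, (Ef_ex_derive_v _ _ _ _ Hs Huv).
    + lra.
  - change (Derive (fun t => Ef x u t) v) with (pv (Ef x) u v).
    assert (G0 := Gf_pos _ _ _ _ Hr Huv).
    unfold nu1, nu2. field. split; lra.
Qed.

End Codazzi.

Lemma nu2_is_derive_u U V x u v : open_itv U -> open_itv V ->
  smooth_surf (rect U V) x -> regular_surf (rect U V) x -> principal_params (rect U V) x ->
  rect U V u v ->
  is_derive (fun s => nu2 x s v) u
    (pu (Gf x) u v * (nu1 x u v - nu2 x u v) / (2 * Gf x u v)).
Proof.
  intros HU HV Hs Hr Hp [Hu Hv].
  assert (K := nu1_is_derive_v V U (swap_surf x) HV HU (smooth_surf_swap U V x Hs)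
    (regular_surf_swap U V x Hr) (principal_params_swap U V x HU HV Hs Hp) v u (conj Hv Hu)).
  assert (Hnu1 : forall s, nu1 (swap_surf x) v s = - nu2 x s v).
  { intro s. unfold nu1, nu2. rewrite Lf_swap. change (Ef (swap_surf x) v s) with (Gf x s v).
    unfold Rdiv. ring. }
  assert (Hnu2 : nu2 (swap_surf x) v u = - nu1 x u v).
  { unfold nu1, nu2. rewrite Nf_swap. change (Gf (swap_surf x) v u) with (Ef x u v).
    unfold Rdiv. ring. }
  apply (is_derive_ext (fun s => - nu1 (swap_surf x) v s)).
  { intro s. rewrite Hnu1. apply Ropp_involutive. }
  eapply is_derive_replace; [apply (is_derive_opp _ _ _ K)|].
  rewrite Hnu1, Hnu2. change (Ef (swap_surf x) v u) with (Gf x u v).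
  change (pv (Ef (swap_surf x)) v u) with (pu (Gf x) u v).
  change (- (pu (Gf x) u v * (- nu1 x u v - - nu2 x u v) / (2 * Gf x u v)) =
    pu (Gf x) u v * (nu1 x u v - nu2 x u v) / (2 * Gf x u v)).
  field. apply Rgt_not_eq, (Gf_pos _ _ _ _ Hr (conj Hu Hv)).
Qed.

(** * Inverting a primitive of exp o Lam *)

Section ExpPrimitive.
Variables (U : R -> Prop) (Lam : R -> R) (u0 : R).
Hypotheses (HU : open_itv U) (HLam : forall u, U u -> ex_derive Lam u) (Hu0 : U u0).

Definition exp_primitive (b : R) : R := RInt (fun w => exp (Lam w)) u0 b.

Lemma exp_Lam_continuous w : U w -> continuous (fun w => exp (Lam w)) w.
Proof.
  intros Hw. apply (@ex_derive_continuous R_AbsRing R_NormedModule). auto_derive. auto.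
Qed.

Lemma exp_primitive_is_derive b : U b -> is_derive exp_primitive b (exp (Lam b)).
Proof.
  intros Hb. apply (is_derive_RInt (fun w => exp (Lam w)) exp_primitive u0 b).
  - apply (filter_imp U); [|apply open_itv_locally; auto].
    intros c Hc. apply (@RInt_correct R_CompleteNormedModule).
    apply (@ex_RInt_continuous R_CompleteNormedModule). intros z Hz.
    apply exp_Lam_continuous. unfold Rmin, Rmax in Hz.
    destruct (Rle_dec u0 c).
    + apply (open_itv_between U u0 c z); auto.
    + apply (open_itv_between U c u0 z); auto; lra.
  - apply exp_Lam_continuous, Hb.
Qed.

Lemma exp_primitive_continuity_pt b : U b -> continuity_pt exp_primitive b.
Proof.
  intros Hb. apply continuity_pt_filterlim.
  apply (@ex_derive_continuous R_AbsRing R_NormedModule).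
  exists (exp (Lam b)). apply exp_primitive_is_derive, Hb.
Qed.

Lemma exp_primitive_lt a b : U a -> U b -> a < b -> exp_primitive a < exp_primitive b.
Proof.
  intros Ha Hb Hab.
  apply (incr_function_le exp_primitive (Finite a) (Finite b) (fun w => exp (Lam w)));
    simpl; try lra.
  - intros z H1 H2. apply exp_primitive_is_derive, (open_itv_between U a b); auto.
  - intros; apply exp_pos.
Qed.

Lemma exp_primitive_le_inv a b : U a -> U b -> exp_primitive a <= exp_primitive b -> a <= b.
Proof.
  intros Ha Hb H. destruct (Rle_dec a b) as [|Hab]; auto.
  assert (exp_primitive b < exp_primitive a) by (apply exp_primitive_lt; auto; lra). lra.
Qed.

Lemma exp_primitive_inj a b : U a -> U b -> exp_primitive a = exp_primitive b -> a = b.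
Proof. intros Ha Hb H. apply Rle_antisym; apply exp_primitive_le_inv; auto; lra. Qed.

Definition exp_primitive_image (s : R) : Prop := exists u, U u /\ exp_primitive u = s.

(* On the image, [epsilon] picks the unique preimage, by [exp_primitive_inj]. *)
Definition exp_primitive_inv (s : R) : R :=
  epsilon (inhabits 0) (fun u => U u /\ exp_primitive u = s).

Lemma exp_primitive_inv_spec s : exp_primitive_image s ->
  U (exp_primitive_inv s) /\ exp_primitive (exp_primitive_inv s) = s.
Proof. intros H. unfold exp_primitive_inv. apply epsilon_spec, H. Qed.

Lemma exp_primitive_invK u : U u -> exp_primitive_inv (exp_primitive u) = u.
Proof.
  intros Hu. destruct (exp_primitive_inv_spec (exp_primitive u)) as [H1 H2].
  - exists u; auto.
  - apply exp_primitive_inj; auto.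
Qed.

Lemma exp_primitive_image_between a b c : exp_primitive_image a -> exp_primitive_image b ->
  a <= c <= b -> exp_primitive_image c.
Proof.
  intros [ua [Hua <-]] [ub [Hub <-]] Hc.
  destruct (Req_dec c (exp_primitive ua)) as [E|E]; [exists ua; auto|].
  destruct (Req_dec c (exp_primitive ub)) as [E'|E']; [exists ub; auto|].
  assert (Hab : ua < ub).
  { destruct (Rlt_le_dec ua ub) as [|Hba]; auto.
    assert (exp_primitive ub <= exp_primitive ua).
    { destruct (Req_dec ua ub) as [<-|]; [lra|].
      apply Rlt_le, exp_primitive_lt; auto; lra. }
    lra. }
  destruct (Ranalysis5.IVT_interv (fun w => exp_primitive w - c) ua ub) as [z [Hz Hz']].
  - intros w Hw. apply continuity_pt_minus.
    + apply exp_primitive_continuity_pt, (open_itv_between U ua ub); auto.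
    + apply continuity_pt_const. intros ? ?; auto.
  - exact Hab.
  - lra.
  - lra.
  - exists z. split; [apply (open_itv_between U ua ub); auto|lra].
Qed.

Lemma exp_primitive_image_open : open exp_primitive_image.
Proof.
  intros s [u [Hu <-]].
  destruct (open_itv_shrink U u HU Hu) as [e [He [Ha Hb]]].
  assert (K1 : exp_primitive (u - e) < exp_primitive u) by (apply exp_primitive_lt; auto; lra).
  assert (K2 : exp_primitive u < exp_primitive (u + e)) by (apply exp_primitive_lt; auto; lra).
  assert (Hd : 0 < Rmin (exp_primitive u - exp_primitive (u - e))
                        (exp_primitive (u + e) - exp_primitive u)) by (apply Rmin_pos; lra).
  exists (mkposreal _ Hd). intros y Hy. change (Rabs (y - exp_primitive u) < Rmin
    (exp_primitive u - exp_primitive (u - e)) (exp_primitive (u + e) - exp_primitive u)) in Hy.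
  apply (exp_primitive_image_between (exp_primitive (u - e)) (exp_primitive (u + e))).
  - exists (u - e); auto.
  - exists (u + e); auto.
  - assert (A1 := Rmin_l (exp_primitive u - exp_primitive (u - e))
                         (exp_primitive (u + e) - exp_primitive u)).
    assert (A2 := Rmin_r (exp_primitive u - exp_primitive (u - e))
                         (exp_primitive (u + e) - exp_primitive u)).
    apply Rabs_def2 in Hy. lra.
Qed.

Lemma exp_primitive_inv_between a b y : U a -> U b ->
  exp_primitive a <= y <= exp_primitive b ->
  exp_primitive_image y /\ a <= exp_primitive_inv y <= b.
Proof.
  intros Ha Hb Hy.
  assert (Img : exp_primitive_image y).
  { apply (exp_primitive_image_between (exp_primitive a) (exp_primitive b)); auto.
    - exists a; auto.
    - exists b; auto. }
  destruct (exp_primitive_inv_spec y Img) as [P1 P2].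
  split; [exact Img|]. split; apply exp_primitive_le_inv; auto; lra.
Qed.

Lemma exp_primitive_inv_is_derive s : exp_primitive_image s ->
  is_derive exp_primitive_inv s (exp (- Lam (exp_primitive_inv s))).
Proof.
  intros [u [Hu <-]].
  destruct (open_itv_shrink U u HU Hu) as [e [He [Ha Hb]]].
  assert (K1 : exp_primitive (u - e) < exp_primitive u) by (apply exp_primitive_lt; auto; lra).
  assert (K2 : exp_primitive u < exp_primitive (u + e)) by (apply exp_primitive_lt; auto; lra).
  assert (Uin : forall w, u - e <= w <= u + e -> U w).
  { intros w Hw. apply (open_itv_between U (u - e) (u + e)); auto. }
  assert (Inv := fun y Hy => exp_primitive_inv_between (u - e) (u + e) y Ha Hb Hy).
  rewrite (exp_primitive_invK u Hu).
  assert (Prf : forall w, exp_primitive_inv (exp_primitive (u - e)) <= w <=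
                  exp_primitive_inv (exp_primitive (u + e)) -> derivable_pt exp_primitive w).
  { intros w Hw. rewrite !exp_primitive_invK in Hw by auto. exists (exp (Lam w)).
    apply is_derive_Reals, exp_primitive_is_derive, Uin, Hw. }
  assert (Inc : exp_primitive_inv (exp_primitive (u - e)) <= exp_primitive_inv (exp_primitive u)
                <= exp_primitive_inv (exp_primitive (u + e)))
    by (rewrite !exp_primitive_invK by auto; lra).
  assert (Id : forall y, exp_primitive (u - e) <= y <= exp_primitive (u + e) ->
                 comp exp_primitive exp_primitive_inv y = id y).
  { intros y Hy. apply exp_primitive_inv_spec, Inv, Hy. }
  assert (Cont : continuity_pt exp_primitive_inv (exp_primitive u)).
  { apply (Ranalysis5.continuity_pt_recip_interv exp_primitive exp_primitive_inv
      (u - e) (u + e)); try lra.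
    - intros c d H1 H2 H3. apply exp_primitive_lt; auto; apply Uin; lra.
    - intros y H1 H2. apply Id; lra.
    - intros y H1 H2. apply Inv; lra.
    - intros c Hc. apply exp_primitive_continuity_pt, Uin, Hc. }
  assert (D := Ranalysis5.derivable_pt_lim_recip_interv exp_primitive exp_primitive_inv
    _ _ _ Prf Cont ltac:(lra) ltac:(lra) Inc Id).
  assert (DV : derive_pt exp_primitive (exp_primitive_inv (exp_primitive u)) (Prf _ Inc) =
               exp (Lam u)).
  { apply derive_pt_eq_0, is_derive_Reals. rewrite exp_primitive_invK by exact Hu.
    apply exp_primitive_is_derive, Hu. }
  rewrite DV in D. apply is_derive_Reals. rewrite exp_Ropp, <- Rdiv_1_l.
  apply D, Rgt_not_eq, exp_pos.
Qed.

End ExpPrimitive.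

Lemma param_change_exp U Lam : open_itv U -> (forall u, U u -> ex_derive Lam u) ->
  exists U' phi, param_change U' U phi /\
    forall s, U' s -> U (phi s) /\ is_derive phi s (exp (- Lam (phi s))).
Proof.
  intros HU HLam. assert (HU0 := HU). destruct HU0 as [[u0 Hu0] _].
  set (U' := exp_primitive_image U Lam u0). set (phi := exp_primitive_inv U Lam u0).
  assert (HU' : open_itv U').
  { split; [exists (exp_primitive Lam u0 u0), u0; auto|]. split.
    - apply (exp_primitive_image_open U Lam u0 HU HLam Hu0).
    - intros a b c Ha Hb Hc. apply (exp_primitive_image_between U Lam u0 HU HLam Hu0 a b); auto. }
  assert (Hd : forall s, U' s -> is_derive phi s (exp (- Lam (phi s)))).
  { intros s Hs. apply (exp_primitive_inv_is_derive U Lam u0 HU HLam Hu0), Hs. }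
  assert (Hphi : forall s, U' s -> U (phi s)).
  { intros s Hs. apply (exp_primitive_inv_spec U Lam u0 s Hs). }
  exists U', phi. split; [split; [exact HU'|split]|].
  - intros s Hs. split; [eexists; apply Hd, Hs|]. split.
    + rewrite (is_derive_unique _ _ _ (Hd s Hs)). apply Rgt_not_eq, exp_pos.
    + apply (ex_derive_ext_loc (fun s => exp (- Lam (phi s)))).
      * apply (filter_imp U'); [|apply HU', Hs].
        intros y Hy. symmetry. apply is_derive_unique, Hd, Hy.
      * assert (E1 := HLam _ (Hphi s Hs)). assert (E2 : ex_derive phi s) by (eexists; apply Hd, Hs).
        auto_derive. auto.
  - intros u. split.
    + intros Hu. exists (exp_primitive Lam u0 u). split; [exists u; auto|].
      apply (exp_primitive_invK U Lam u0 HU HLam Hu0), Hu.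
    + intros [s [Hs <-]]. apply Hphi, Hs.
  - intros s Hs. split; [apply Hphi|apply Hd]; exact Hs.
Qed.

(** * Changes of principal parameters *)

Definition reparam_surf (x : surf) (phi psi : R -> R) : surf := fun s t => x (phi s) (psi t).

Section Reparam.
Variables (U V U' V' : R -> Prop) (phi psi : R -> R) (x : surf).
Hypotheses (HV' : open_itv V') (Hs : smooth_surf (rect U V) x)
  (Hphi : forall s, U' s -> U (phi s) /\ ex_derive phi s)
  (Hpsi : forall t, V' t -> V (psi t) /\ ex_derive psi t).

Lemma rect_reparam s t : rect U' V' s t -> rect U V (phi s) (psi t).
Proof. intros [H1 H2]. split; [apply Hphi|apply Hpsi]; auto. Qed.

Lemma pu_reparam (h : R -> R -> R) s t : Ck 1 (rect U V) h -> rect U' V' s t ->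
  pu (fun s t => h (phi s) (psi t)) s t = Derive phi s * pu h (phi s) (psi t).
Proof.
  intros Hh Hst. apply (Derive_comp (fun u => h u (psi t)) phi s).
  - apply (Ck_ex_derive_u 0 (rect U V)); auto. apply rect_reparam, Hst.
  - apply Hphi, Hst.
Qed.

Lemma pv_reparam (h : R -> R -> R) s t : Ck 1 (rect U V) h -> rect U' V' s t ->
  pv (fun s t => h (phi s) (psi t)) s t = Derive psi t * pv h (phi s) (psi t).
Proof.
  intros Hh Hst. apply (Derive_comp (fun v => h (phi s) v) psi t).
  - apply (Ck_ex_derive_v 0 (rect U V)); auto. apply rect_reparam, Hst.
  - apply Hpsi, Hst.
Qed.

Lemma pv_pu_reparam (h : R -> R -> R) s t : Ck 2 (rect U V) h -> rect U' V' s t ->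
  pv (pu (fun s t => h (phi s) (psi t))) s t =
  Derive phi s * Derive psi t * pv (pu h) (phi s) (psi t).
Proof.
  intros Hh Hst. unfold pv at 1.
  rewrite (Derive_ext_loc _ (fun t' => Derive phi s * pu h (phi s) (psi t'))).
  - rewrite Derive_scal, Rmult_assoc. f_equal.
    apply (pv_reparam (pu h) s t); auto. apply Ck_pu, Hh.
  - apply (filter_imp (fun t' => rect U' V' s t')); [|apply rect_locally_v; auto].
    intros t' Ht'. apply pu_reparam; auto. apply Ck_pred, Hh.
Qed.

Ltac smooth_component := first [apply (proj1 Hs) | apply (proj1 (proj2 Hs)) | apply (proj2 (proj2 Hs))].

Lemma Pu_reparam s t : rect U' V' s t ->
  Pu (reparam_surf x phi psi) s t = scal3 (Derive phi s) (Pu x (phi s) (psi t)).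
Proof.
  intros H. unfold Pu, scal3, v1, v2, v3; simpl.
  f_equal; [f_equal|]; apply (pu_reparam (fun u v => _ (x u v))); auto; smooth_component.
Qed.

Lemma Pv_reparam s t : rect U' V' s t ->
  Pv (reparam_surf x phi psi) s t = scal3 (Derive psi t) (Pv x (phi s) (psi t)).
Proof.
  intros H. unfold Pv, scal3, v1, v2, v3; simpl.
  f_equal; [f_equal|]; apply (pv_reparam (fun u v => _ (x u v))); auto; smooth_component.
Qed.

Lemma Pv_Pu_reparam s t : rect U' V' s t ->
  Pv (Pu (reparam_surf x phi psi)) s t =
  scal3 (Derive phi s * Derive psi t) (Pv (Pu x) (phi s) (psi t)).
Proof.
  intros H. unfold Pv at 1. unfold scal3, v1, v2, v3; simpl.
  f_equal; [f_equal|]; apply (pv_pu_reparam (fun u v => _ (x u v))); auto; smooth_component.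
Qed.

Lemma Ef_reparam s t : rect U' V' s t ->
  Ef (reparam_surf x phi psi) s t = Derive phi s ^ 2 * Ef x (phi s) (psi t).
Proof. intros H. unfold Ef. rewrite Pu_reparam, !dot3_scal_l, !dot3_scal_r by auto. ring. Qed.

Lemma Gf_reparam s t : rect U' V' s t ->
  Gf (reparam_surf x phi psi) s t = Derive psi t ^ 2 * Gf x (phi s) (psi t).
Proof. intros H. unfold Gf. rewrite Pv_reparam, !dot3_scal_l, !dot3_scal_r by auto. ring. Qed.

Lemma Ff_reparam s t : rect U' V' s t ->
  Ff (reparam_surf x phi psi) s t = Derive phi s * Derive psi t * Ff x (phi s) (psi t).
Proof.
  intros H. unfold Ff. rewrite Pu_reparam, Pv_reparam, dot3_scal_l, dot3_scal_r by auto. ring.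
Qed.

Lemma principal_params_reparam : regular_surf (rect U V) x -> principal_params (rect U V) x ->
  principal_params (rect U' V') (reparam_surf x phi psi).
Proof.
  intros Hr Hp s t Hst. destruct (Hp _ _ (rect_reparam s t Hst)) as [F0 M0]. split.
  - rewrite Ff_reparam, F0 by exact Hst. ring.
  - assert (HW := Hr _ _ (rect_reparam s t Hst)). assert (Hn := norm3_pos _ HW).
    unfold Mf, unormal in *.
    rewrite Pv_Pu_reparam, Pu_reparam, Pv_reparam, cross3_scal by exact Hst.
    set (W := cross3 (Pu x (phi s) (psi t)) (Pv x (phi s) (psi t))) in *.
    assert (HC : dot3 (Pv (Pu x) (phi s) (psi t)) W = 0).
    { rewrite dot3_scal_r in M0. apply Rmult_integral in M0 as [M0|M0]; [|exact M0].
      exfalso. apply (Rinv_neq_0_compat (norm3 W)); lra. }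
    rewrite !dot3_scal_r, dot3_scal_l, HC. ring.
Qed.

End Reparam.

(** * Weingarten surfaces *)

Section Weingarten.
Variables (U V I : R -> Prop) (x : surf) (f g Phi Psi : R -> R) (nu : R -> R -> R).
Hypotheses (HU : open_itv U) (HV : open_itv V)
  (Hs : smooth_surf (rect U V) x) (Hr : regular_surf (rect U V) x)
  (Hp : principal_params (rect U V) x) (Hsr : strongly_regular (rect U V) x)
  (Hw : weingarten (rect U V) x I f g nu)
  (HPhi : antiderivative_on I (fun t => Derive f t / (f t - g t)) Phi)
  (HPsi : antiderivative_on I (fun t => Derive g t / (g t - f t)) Psi).

Lemma f_plus_g_comp_is_derive (n : R -> R) t : I (n t) -> ex_derive n t ->
  is_derive (fun s => f (n s) + g (n s)) t (Derive n t * (Derive f (n t) + Derive g (n t))).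
Proof.
  intros In Hn. destruct (proj1 Hw _ In) as [Df [Dg _]].
  eapply is_derive_replace.
  - apply (is_derive_plus (fun s => f (n s)) (fun s => g (n s)));
      apply (is_derive_comp _ n); apply Derive_correct; assumption.
  - change (Derive n t * Derive f (n t) + Derive n t * Derive g (n t) =
      Derive n t * (Derive f (n t) + Derive g (n t))). ring.
Qed.

Lemma Phi_minus_Psi_comp_is_derive (n : R -> R) t : I (n t) -> ex_derive n t ->
  is_derive (fun s => Phi (n s) - Psi (n s)) t
    (Derive n t * (Derive f (n t) + Derive g (n t)) / (f (n t) - g (n t))).
Proof.
  intros In Hn. destruct (proj1 Hw _ In) as [_ [_ [Sfg _]]].
  eapply is_derive_replace.
  - apply (is_derive_minus (fun s => Phi (n s)) (fun s => Psi (n s)));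
      apply (is_derive_comp _ n); [apply HPhi, In|apply Derive_correct, Hn
                                  |apply HPsi, In|apply Derive_correct, Hn].
  - change (Derive n t * (Derive f (n t) / (f (n t) - g (n t))) -
      Derive n t * (Derive g (n t) / (g (n t) - f (n t))) =
      Derive n t * (Derive f (n t) + Derive g (n t)) / (f (n t) - g (n t))).
    field. lra.
Qed.

Lemma lambda_f_is_derive_v u v : rect U V u v -> is_derive (fun t => lambda_f x Phi nu u t) v 0.
Proof.
  intros Huv. destruct Hw as [Wf Wnu].
  destruct (Wnu u v Huv) as [In [_ [Nv [_ [N1 N2]]]]].
  destruct (Wf _ In) as [Df _].
  assert (E0 := Ef_pos _ _ _ _ Hr Huv).
  assert (S0 := proj1 (Hsr u v Huv)).
  eapply is_derive_replace.
  - apply (is_derive_plus (fun t => ln (sqrt (Ef x u t))) (fun t => Phi (nu u t))).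
    + apply is_derive_ln_sqrt; [apply Derive_correct, (Ef_ex_derive_v _ _ _ _ Hs Huv)|exact E0].
    + apply (is_derive_antiderivative_comp f Phi (fun t => nu u t) (fun t => nu1 x u t));
        [exact Df|exact Nv|apply HPhi, In| |apply (nu1_is_derive_v U V); auto].
      apply (filter_imp (fun t => rect U V u t)); [|apply rect_locally_v; auto].
      intros t Ht. apply (Wnu u t Ht).
  - change (Derive (fun t => Ef x u t) v) with (pv (Ef x) u v).
    change (pv (Ef x) u v / (2 * Ef x u v) +
      pv (Ef x) u v * (nu2 x u v - nu1 x u v) / (2 * Ef x u v) / (f (nu u v) - g (nu u v)) = 0).
    rewrite <- N1, <- N2. field. split; lra.
Qed.

Lemma mu_f_is_derive_u u v : rect U V u v -> is_derive (fun s => mu_f x Psi nu s v) u 0.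
Proof.
  intros Huv. destruct Hw as [Wf Wnu].
  destruct (Wnu u v Huv) as [In [Nu [_ [_ [N1 N2]]]]].
  destruct (Wf _ In) as [_ [Dg _]].
  assert (G0 := Gf_pos _ _ _ _ Hr Huv).
  assert (S0 := proj1 (Hsr u v Huv)).
  eapply is_derive_replace.
  - apply (is_derive_plus (fun s => ln (sqrt (Gf x s v))) (fun s => Psi (nu s v))).
    + apply is_derive_ln_sqrt; [apply Derive_correct, (Gf_ex_derive_u _ _ _ _ Hs Huv)|exact G0].
    + apply (is_derive_antiderivative_comp g Psi (fun s => nu s v) (fun s => nu2 x s v));
        [exact Dg|exact Nu|apply HPsi, In| |apply (nu2_is_derive_u U V); auto].
      apply (filter_imp (fun s => rect U V s v)); [|apply rect_locally_u; auto].
      intros s Hs1. apply (Wnu s v Hs1).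
  - change (Derive (fun s => Gf x s v) u) with (pu (Gf x) u v).
    change (pu (Gf x) u v / (2 * Gf x u v) +
      pu (Gf x) u v * (nu1 x u v - nu2 x u v) / (2 * Gf x u v) / (g (nu u v) - f (nu u v)) = 0).
    rewrite <- N1, <- N2. field. split; lra.
Qed.

Lemma lambda_f_ex_derive_u u v : rect U V u v -> ex_derive (fun s => lambda_f x Phi nu s v) u.
Proof.
  intros Huv. destruct (proj2 Hw u v Huv) as [In [Nu _]].
  eexists. apply (is_derive_plus (fun s => ln (sqrt (Ef x s v))) (fun s => Phi (nu s v))).
  - apply is_derive_ln_sqrt.
    + apply Derive_correct, (Ef_ex_derive_u _ _ _ _ Hs Huv).
    + apply (Ef_pos _ _ _ _ Hr Huv).
  - apply (is_derive_comp Phi (fun s => nu s v)); [apply HPhi, In|apply Derive_correct, Nu].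
Qed.

Lemma mu_f_ex_derive_v u v : rect U V u v -> ex_derive (fun t => mu_f x Psi nu u t) v.
Proof.
  intros Huv. destruct (proj2 Hw u v Huv) as [In [_ [Nv _]]].
  eexists. apply (is_derive_plus (fun t => ln (sqrt (Gf x u t))) (fun t => Psi (nu u t))).
  - apply is_derive_ln_sqrt.
    + apply Derive_correct, (Gf_ex_derive_v _ _ _ _ Hs Huv).
    + apply (Gf_pos _ _ _ _ Hr Huv).
  - apply (is_derive_comp Psi (fun t => nu u t)); [apply HPsi, In|apply Derive_correct, Nv].
Qed.

Lemma mean_curvature_const_iff :
  (forall u v, rect U V u v -> Derive f (nu u v) + Derive g (nu u v) = 0) <->
  (exists H0 : R, forall u v, rect U V u v -> (f (nu u v) + g (nu u v)) / 2 = H0).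
Proof.
  destruct Hw as [_ Wnu]. split.
  - intros Hfg. assert (HU0 := HU). assert (HV0 := HV).
    destruct HU0 as [[u0 Hu0] _]. destruct HV0 as [[v0 Hv0] _].
    exists ((f (nu u0 v0) + g (nu u0 v0)) / 2). intros u v Huv.
    assert (Hdu : forall u v, rect U V u v -> is_derive (fun s => f (nu s v) + g (nu s v)) u 0).
    { intros u' v' H'. destruct (Wnu u' v' H') as [In [Nu _]].
      eapply is_derive_replace; [apply (f_plus_g_comp_is_derive (fun s => nu s v')); assumption|].
      rewrite (Hfg u' v' H'). ring. }
    assert (Hdv : forall u v, rect U V u v -> is_derive (fun t => f (nu u t) + g (nu u t)) v 0).
    { intros u' v' H'. destruct (Wnu u' v' H') as [In [_ [Nv _]]].
      eapply is_derive_replace; [apply (f_plus_g_comp_is_derive (fun t => nu u' t)); assumption|].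
      rewrite (Hfg u' v' H'). ring. }
    rewrite (rect_deriv0_const U V (fun u v => f (nu u v) + g (nu u v)) HU HV Hdu Hdv
      u v u0 v0 Huv (conj Hu0 Hv0)). reflexivity.
  - intros [H0 HH] u v Huv. destruct (Wnu u v Huv) as [In [Nu [_ [Nuv _]]]].
    assert (K := f_plus_g_comp_is_derive (fun s => nu s v) u In Nu).
    apply (is_derive_locally_const _ _ (2 * H0)) in K.
    + apply Rmult_integral in K as [K|K]; [|exact K].
      exfalso. apply Nuv. unfold pu. rewrite K. ring.
    + apply (filter_imp (fun s => rect U V s v)); [|apply rect_locally_u; auto].
      intros s Hs1. specialize (HH s v Hs1). lra.
Qed.

Lemma isothermal_gpp_mean_curvature_const : admits_isothermal_gpp U V x nu Phi Psi ->
  forall u v, rect U V u v -> Derive f (nu u v) + Derive g (nu u v) = 0.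
Proof.
  intros [U' [V' [phi [psi [[HU' [Dphi Sphi]] [[_ [_ Spsi]] [[_ [cl [cm Hc]]] Hiso]]]]]]]
    u v [Hu Hv].
  destruct (proj1 (Sphi u) Hu) as [s [Hs' <-]].
  destruct (proj1 (Spsi v) Hv) as [t [Ht' <-]].
  assert (Hst : rect U V (phi s) (psi t)) by (split; auto).
  destruct (proj2 Hw _ _ Hst) as [In [Nu [_ [Nuv _]]]].
  destruct (proj1 Hw _ In) as [_ [_ [Sfg _]]].
  destruct (Dphi s Hs') as [Ephi [Nphi _]].
  set (n := fun s' => nu (phi s') (psi t)).
  assert (Hn : ex_derive n s) by (apply (ex_derive_comp (fun u => nu u (psi t)) phi); auto).
  assert (Dn : Derive n s = Derive phi s * pu nu (phi s) (psi t))
    by (apply (Derive_comp (fun u => nu u (psi t)) phi); auto).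
  assert (Hloc : locally s (fun s' => Phi (n s') - Psi (n s') = cl - cm)).
  { apply (filter_imp U'); [|apply open_itv_locally; auto].
    intros s1 Hs1. assert (R1 : rect U' V' s1 t) by (split; auto).
    destruct (Hc s1 t R1) as [L1 M1]. destruct (Hiso s1 t R1) as [E1 _].
    unfold lambda_f, mu_f in L1, M1. rewrite E1 in L1. unfold n. lra. }
  assert (K := is_derive_locally_const _ _ _ _ Hloc
    (Phi_minus_Psi_comp_is_derive n s In Hn)).
  rewrite Dn in K. unfold n in K.
  assert (Hnu : pu nu (phi s) (psi t) <> 0) by (intro Z; apply Nuv; rewrite Z; ring).
  apply Rmult_integral in K as [K|K].
  - apply Rmult_integral in K as [K|K].
    + apply Rmult_integral in K as [K|K]; [contradiction|contradiction].
    + exact K.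
  - exfalso. apply (Rinv_neq_0_compat (f (nu (phi s) (psi t)) - g (nu (phi s) (psi t))));
      [lra|exact K].
Qed.

Lemma Phi_minus_Psi_comp_const :
  (forall u v, rect U V u v -> Derive f (nu u v) + Derive g (nu u v) = 0) ->
  forall u v u' v', rect U V u v -> rect U V u' v' ->
  Phi (nu u v) - Psi (nu u v) = Phi (nu u' v') - Psi (nu u' v').
Proof.
  intros Hfg.
  apply (rect_deriv0_const U V (fun u v => Phi (nu u v) - Psi (nu u v)) HU HV).
  - intros u v Huv. destruct (proj2 Hw u v Huv) as [In [Nu _]].
    eapply is_derive_replace.
    + apply (Phi_minus_Psi_comp_is_derive (fun s => nu s v)); assumption.
    + rewrite (Hfg u v Huv). unfold Rdiv. ring.
  - intros u v Huv. destruct (proj2 Hw u v Huv) as [In [_ [Nv _]]].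
    eapply is_derive_replace.
    + apply (Phi_minus_Psi_comp_is_derive (fun t => nu u t)); assumption.
    + rewrite (Hfg u v Huv). unfold Rdiv. ring.
Qed.

Lemma ln_sqrt_Ef_exp_reparam U' V' phi psi v0 : V v0 ->
  (forall s, U' s -> U (phi s) /\ is_derive phi s (exp (- lambda_f x Phi nu (phi s) v0))) ->
  (forall t, V' t -> V (psi t) /\ ex_derive psi t) ->
  forall s t, rect U' V' s t ->
  ln (sqrt (Ef (reparam_surf x phi psi) s t)) = - Phi (nu (phi s) (psi t)).
Proof.
  intros Hv0 Dphi Hpsi s t [Hs1 Ht1].
  destruct (Dphi s Hs1) as [Hu Dphi_s]. destruct (Hpsi t Ht1) as [Hv _].
  assert (Hphi : forall s, U' s -> U (phi s) /\ ex_derive phi s).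
  { intros s' Hs'. destruct (Dphi s' Hs') as [A1 A2]. split; [|eexists]; eassumption. }
  rewrite (Ef_reparam U V U' V' phi psi x Hs Hphi Hpsi s t (conj Hs1 Ht1)).
  rewrite (is_derive_unique _ _ _ Dphi_s), ln_sqrt_scale, ln_exp;
    [|apply exp_pos|apply (Ef_pos _ _ _ _ Hr); split; auto].
  rewrite (open_itv_deriv0_const V (fun t => lambda_f x Phi nu (phi s) t) HV
    (fun t Ht => lambda_f_is_derive_v (phi s) t (conj Hu Ht)) v0 (psi t) Hv0 Hv).
  unfold lambda_f. ring.
Qed.

Lemma ln_sqrt_Gf_exp_reparam U' V' phi psi u0 c : U u0 ->
  (forall s, U' s -> U (phi s) /\ ex_derive phi s) ->
  (forall t, V' t -> V (psi t) /\ is_derive psi t (exp (- (mu_f x Psi nu u0 (psi t) + c)))) ->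
  forall s t, rect U' V' s t ->
  ln (sqrt (Gf (reparam_surf x phi psi) s t)) = - c - Psi (nu (phi s) (psi t)).
Proof.
  intros Hu0 Hphi Dpsi s t [Hs1 Ht1].
  destruct (Hphi s Hs1) as [Hu _]. destruct (Dpsi t Ht1) as [Hv Dpsi_t].
  assert (Hpsi : forall t, V' t -> V (psi t) /\ ex_derive psi t).
  { intros t' Ht'. destruct (Dpsi t' Ht') as [A1 A2]. split; [|eexists]; eassumption. }
  rewrite (Gf_reparam U V U' V' phi psi x Hs Hphi Hpsi s t (conj Hs1 Ht1)).
  rewrite (is_derive_unique _ _ _ Dpsi_t), ln_sqrt_scale, ln_exp;
    [|apply exp_pos|apply (Gf_pos _ _ _ _ Hr); split; auto].
  rewrite (open_itv_deriv0_const U (fun s => mu_f x Psi nu s (psi t)) HU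
    (fun s Hs2 => mu_f_is_derive_u s (psi t) (conj Hs2 Hv)) u0 (phi s) Hu0 Hu).
  unfold mu_f. ring.
Qed.

(* The isothermal geometric parameters are found by integrating [ds = exp lambda du] and
   [dt = exp (mu + c0) dv], where [c0] is the constant value of [Phi o nu - Psi o nu]. *)
Lemma mean_curvature_const_isothermal_gpp :
  (forall u v, rect U V u v -> Derive f (nu u v) + Derive g (nu u v) = 0) ->
  admits_isothermal_gpp U V x nu Phi Psi.
Proof.
  intros Hfg. assert (HU0 := HU). assert (HV0 := HV).
  destruct HU0 as [[u0 Hu0] _]. destruct HV0 as [[v0 Hv0] _].
  set (c0 := Phi (nu u0 v0) - Psi (nu u0 v0)).
  destruct (param_change_exp U (fun u => lambda_f x Phi nu u v0) HU) as [U' [phi [Pphi Dphi]]].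
  { intros u Hu. apply lambda_f_ex_derive_u. split; auto. }
  destruct (param_change_exp V (fun v => mu_f x Psi nu u0 v + c0) HV) as [V' [psi [Ppsi Dpsi]]].
  { intros v Hv. apply (ex_derive_plus (fun v => mu_f x Psi nu u0 v) (fun _ => c0)).
    - apply mu_f_ex_derive_v. split; auto.
    - apply ex_derive_const. }
  exists U', V', phi, psi. split; [exact Pphi|]. split; [exact Ppsi|].
  assert (Hphi : forall s, U' s -> U (phi s) /\ ex_derive phi s).
  { intros s Hs1. destruct (Dphi s Hs1) as [A1 A2]. split; [|eexists]; eassumption. }
  assert (Hpsi : forall t, V' t -> V (psi t) /\ ex_derive psi t).
  { intros t Ht. destruct (Dpsi t Ht) as [A1 A2]. split; [|eexists]; eassumption. }
  assert (HE := ln_sqrt_Ef_exp_reparam U' V' phi psi v0 Hv0 Dphi Hpsi).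
  assert (HG := ln_sqrt_Gf_exp_reparam U' V' phi psi u0 c0 Hu0 Hphi Dpsi).
  assert (Hpp := principal_params_reparam U V U' V' phi psi x (proj1 Ppsi) Hs Hphi Hpsi Hr Hp).
  change (fun s t => x (phi s) (psi t)) with (reparam_surf x phi psi).
  split; [split; [exact Hpp|]|].
  - exists 0, (- c0). intros s t H. unfold lambda_f, mu_f.
    rewrite (HE s t H), (HG s t H). split; ring.
  - intros s t H. split; [|apply Hpp, H].
    assert (Huv := rect_reparam U V U' V' phi psi Hphi Hpsi s t H).
    assert (HEG := Phi_minus_Psi_comp_const Hfg _ _ _ _ Huv (conj Hu0 Hv0)).
    apply ln_sqrt_inj.
    + rewrite (Ef_reparam U V U' V' phi psi x Hs Hphi Hpsi s t H).
      apply Rmult_lt_0_compat; [apply pow2_gt_0, (proj2 Pphi), H|apply (Ef_pos _ _ _ _ Hr Huv)].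
    + rewrite (Gf_reparam U V U' V' phi psi x Hs Hphi Hpsi s t H).
      apply Rmult_lt_0_compat; [apply pow2_gt_0, (proj2 Ppsi), H|apply (Gf_pos _ _ _ _ Hr Huv)].
    + rewrite (HE s t H), (HG s t H). fold c0 in HEG. lra.
Qed.

End Weingarten.

Theorem corollary4p7 (U V I : R -> Prop) (x : surf) (f g Phi Psi : R -> R) (nu : R -> R -> R) :
  open_itv U -> open_itv V -> open_itv I ->
  smooth_surf (rect U V) x -> regular_surf (rect U V) x ->
  principal_params (rect U V) x -> strongly_regular (rect U V) x ->
  weingarten (rect U V) x I f g nu ->
  antiderivative_on I (fun t => Derive f t / (f t - g t)) Phi ->
  antiderivative_on I (fun t => Derive g t / (g t - f t)) Psi ->
  (admits_isothermal_gpp U V x nu Phi Psi <->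
     (forall u v, rect U V u v -> Derive f (nu u v) + Derive g (nu u v) = 0)) /\
  ((forall u v, rect U V u v -> Derive f (nu u v) + Derive g (nu u v) = 0) <->
     (exists H0 : R, forall u v, rect U V u v -> (f (nu u v) + g (nu u v)) / 2 = H0)).
Proof.
  intros HU HV _ Hs Hr Hp Hsr Hw HPhi HPsi.
  split; [split|].
  - eapply isothermal_gpp_mean_curvature_const; eassumption.
  - eapply mean_curvature_const_isothermal_gpp; eassumption.
  - eapply mean_curvature_const_iff; eassumption.
Qed.
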